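(* Let $\mathcal{X}=\{A\in\mathcal{M}_d: A=A^\dagger,\ \operatorname{tr}A=0\}$, viewed as a real vector space, with basis consisting of $\sigma_x^{jk}=|j\rangle\langle k|+|k\rangle\langle j|$ and $\sigma_y^{jk}=-i(|j\rangle\langle k|-|k\rangle\langle j|)$ for $1\le j<k\le d$, and $\sigma_z^j=|j\rangle\langle j|-|j+1\rangle\langle j+1|$ for $j=1,\dots,d-1$. Let $\mathcal{V}=\{A\mapsto UAU^\dagger: U\in\mathcal{M}_d\text{ unitary}\}$, regarded as a set of real-linear maps on $\mathcal{X}$, and let $\mathrm{zerospan}_{\mathbb{R}}\mathcal{V}$ denote the set of all finite real linear combinations $\sum_i\lambda_i V_i$ with $V_i\in\mathcal{V}$, $\lambda_i\in\mathbb{R}$ and $\sum_i\lambda_i=0$. Then for each basis vector $B$ of $\mathcal{X}$ listed above there exists $T\in\mathrm{zerospan}_{\mathbb{R}}\mathcal{V}$ with $T(B)=B$ and $T(B')=0$ for every other basis vector $B'$ in the list.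
   Context: $\{|1\rangle,\dots,|d\rangle\}$ is the standard basis of $\mathbb{C}^d$. *)

From HB Require Import structures.
From mathcomp Require Import all_boot all_order all_algebra.
From mathcomp Require Import reals.
From mathcomp.real_closed Require Import complex.
Set Implicit Arguments. Unset Strict Implicit. Unset Printing Implicit Defensive.
Import Order.TTheory GRing.Theory Num.Theory.
Local Open Scope ring_scope.
Local Open Scope complex_scope.

Definition dagger (R : rcfType) (d : nat) (A : 'M[R[i]]_d) : 'M[R[i]]_d :=
  (map_mx (@conjc R) A)^T.

Definition unitary (R : rcfType) (d : nat) (U : 'M[R[i]]_d) : Prop :=
  dagger U *m U = 1%:M /\ U *m dagger U = 1%:M.

(* Indices of the listed basis of X (0-based: |j> is the basis vector
   with index j : 'I_d, i.e. paper's |j+1>). *)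
Inductive pauli_idx : Type :=
| SX of nat & nat
| SY of nat & nat
| SZ of nat.

Definition valid_idx (d : nat) (b : pauli_idx) : Prop :=
  match b with
  | SX j k => (j < k < d)%N
  | SY j k => (j < k < d)%N
  | SZ j => (j.+1 < d)%N
  end.

Definition ket_bra (R : rcfType) (d j k : nat) : 'M[R[i]]_d :=
  \matrix_(a < d, b < d) (if ((a == j :> nat) && (b == k :> nat)) then 1 else 0).

Definition basis_mx (R : rcfType) (d : nat) (b : pauli_idx) : 'M[R[i]]_d :=
  match b with
  | SX j k => ket_bra R d j k + ket_bra R d k j
  | SY j k => (- 'i) *: (ket_bra R d j k - ket_bra R d k j)
  | SZ j => ket_bra R d j j - ket_bra R d j.+1 j.+1
  end.

Definition comb_map (R : rcfType) (d n : nat) (lam : 'I_n -> R)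
  (U : 'I_n -> 'M[R[i]]_d) (A : 'M[R[i]]_d) : 'M[R[i]]_d :=
  \sum_(m < n) ((lam m)%:C *: (U m *m A *m dagger (U m))).

Definition in_zerospan (R : rcfType) (d : nat)
  (T : 'M[R[i]]_d -> 'M[R[i]]_d) : Prop :=
  exists (n : nat) (lam : 'I_n -> R) (U : 'I_n -> 'M[R[i]]_d),
    (forall m, unitary (U m)) /\ \sum_(m < n) lam m = 0 /\
    (forall A, T A = comb_map lam U A).

From HB Require Import structures.
From mathcomp Require Import all_boot all_order all_algebra all_fingroup.
From mathcomp Require Import reals.
From mathcomp.real_closed Require Import complex.
From mathcomp Require Import ring zify.
Import Order.TTheory GRing.Theory Num.Theory.
Local Open Scope ring_scope.
Local Open Scope complex_scope.
Set Implicit Arguments. Unset Strict Implicit. Unset Printing Implicit Defensive.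

(* Real combinations of unitary conjugations A |-> U A U^dagger form a space
   closed under sums, real scalings and composition, the total weight of the
   coefficients being additive, resp. multiplicative; so it suffices to build
   the required maps out of pieces one of which has total weight 0.
   Averaging A with its conjugate by the diagonal sign flip at j kills the
   entries having exactly one index equal to j; averaging with the negated
   conjugate keeps only those entries, and has weight 0.  Two such averages at j and k, after an
   average with the transposition (j k), turn A into a multiple of the
   basis vector, the multiple being (A_jk + A_kj)/2, (i/2)(A_jk - A_kj) or
   (A_jj - A_kk)/2.  For sigma_z^j = |j><j| - |j+1><j+1| one first sums the
   conjugates by permutations moving (j, j+1) to every pair (a, b) with
   a <= j < b: for traceless A the resulting coefficient
   (1/d) sum_(a <= j < b) (A_aa - A_bb) equals sum_(a <= j) A_aa, which is
   the sigma_z^j-coordinate of A in the given basis. *)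

Section UnitaryCombinations.
Variables (R : rcfType) (d : nat).
Local Notation M := 'M[R[i]]_d.

Definition Ad (U A : M) : M := U *m A *m dagger U.

Definition unitary_comb (s : R) (T : M -> M) : Prop :=
  exists (n : nat) (lam : 'I_n -> R) (U : 'I_n -> M),
    (forall m, unitary (U m)) /\ \sum_(m < n) lam m = s /\
    (forall A, T A = comb_map lam U A).

Lemma unitary_comb_ext s T T' :
  unitary_comb s T -> T =1 T' -> unitary_comb s T'.
Proof.
move=> [n [lam [U [uU [sl ET]]]]] eT; exists n, lam, U.
by do 2 split=> //; move=> A; rewrite -eT.
Qed.

Lemma dagger_mul (A B : M) : dagger (A *m B) = dagger B *m dagger A.
Proof. by rewrite /dagger map_mxM trmx_mul. Qed.

Lemma unitary_mul (U V : M) : unitary U -> unitary V -> unitary (U *m V).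
Proof.
move=> [UU' U'U] [VV' V'V]; rewrite /unitary dagger_mul !mulmxA.
by rewrite -(mulmxA _ _ U) UU' -(mulmxA _ V) V'V !mulmx1.
Qed.

Lemma Ad_comb_map (V : M) n (lam : 'I_n -> R) (U : 'I_n -> M) (A : M) :
  Ad V (comb_map lam U A) = comb_map lam (fun m => V *m U m) A.
Proof.
rewrite /Ad /comb_map mulmx_sumr mulmx_suml; apply: eq_bigr => m _.
by rewrite -scalemxAr -scalemxAl dagger_mul !mulmxA.
Qed.

Lemma unitary_comb_Ad U : unitary U -> unitary_comb 1 (Ad U).
Proof.
exists 1%N, (fun=> 1), (fun=> U); split=> //; split; first by rewrite big_ord1.
by move=> A; rewrite /comb_map big_ord1 scale1r.
Qed.

Lemma unitary_comb_id : unitary_comb 1 id.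
Proof.
have dagger1 : dagger (1%:M : M) = 1%:M by rewrite /dagger map_mx1 trmx1.
have u1 : unitary (1%:M : M) by rewrite /unitary dagger1 mulmx1.
by apply: unitary_comb_ext (unitary_comb_Ad u1) _ => A; rewrite /Ad dagger1 mulmx1 mul1mx.
Qed.

Lemma unitary_comb0 : unitary_comb 0 (fun=> 0).
Proof.
exists 0%N, (fun=> 0), (fun=> 1%:M); split; first by case.
by rewrite big_ord0; split=> // A; rewrite /comb_map big_ord0.
Qed.

Lemma unitary_combD s t T1 T2 : unitary_comb s T1 -> unitary_comb t T2 ->
  unitary_comb (s + t) (fun A => T1 A + T2 A).
Proof.
move=> [n1 [l1 [U1 [uU1 [sl1 E1]]]]] [n2 [l2 [U2 [uU2 [sl2 E2]]]]].
pose glue X (f : 'I_n1 -> X) (g : 'I_n2 -> X) i :=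
  match split i with inl a => f a | inr b => g b end.
have glueL X f g i : @glue X f g (lshift n2 i) = f i.
  by rewrite /glue (unsplitK (inl i : _ + 'I_n2)).
have glueR X f g i : @glue X f g (rshift n1 i) = g i.
  by rewrite /glue (unsplitK (inr i : 'I_n1 + _)).
exists (n1 + n2)%N, (glue _ l1 l2), (glue _ U1 U2); split.
  by move=> i; rewrite /glue; case: (split i).
split; first by rewrite big_split_ord /= -sl1 -sl2;
  congr (_ + _); apply: eq_bigr => i _; rewrite ?glueL ?glueR.
move=> A; rewrite E1 E2 /comb_map big_split_ord /=.
by congr (_ + _); apply: eq_bigr => i _; rewrite ?glueL ?glueR.
Qed.

Lemma unitary_combZ s (c : R) T :
  unitary_comb s T -> unitary_comb (c * s) (fun A => c%:C *: T A).
Proof.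
move=> [n [l [U [uU [sl ET]]]]]; exists n, (fun m => c * l m), U.
split=> //; split; first by rewrite -sl mulr_sumr.
by move=> A; rewrite ET /comb_map scaler_sumr; apply: eq_bigr => m _;
  rewrite scalerA rmorphM.
Qed.

Lemma unitary_comb_sum (I : Type) (r : seq I) (P : pred I) (s : I -> R)
    (T : I -> M -> M) :
  (forall i, P i -> unitary_comb (s i) (T i)) ->
  unitary_comb (\sum_(i <- r | P i) s i) (fun A => \sum_(i <- r | P i) T i A).
Proof.
move=> cT; elim: r => [|i r IHr].
  by rewrite big_nil; apply: unitary_comb_ext unitary_comb0 _ => A; rewrite big_nil.
rewrite big_cons; case: ifP => Pi.
  by apply: unitary_comb_ext (unitary_combD (cT i Pi) IHr) _ => A; rewrite big_cons Pi.
by apply: unitary_comb_ext IHr _ => A; rewrite big_cons Pi.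
Qed.

Lemma unitary_comb_comp s t T1 T2 : unitary_comb s T1 -> unitary_comb t T2 ->
  unitary_comb (s * t) (T1 \o T2).
Proof.
move=> [n [l [U [uU [sl E1]]]]] [n2 [l2 [U2 [uU2 [sl2 E2]]]]].
have AdT2 m : unitary_comb t (fun A => Ad (U m) (T2 A)).
  exists n2, l2, (fun m' => U m *m U2 m'); split; first by move=> m'; apply: unitary_mul.
  by split=> // A; rewrite E2 Ad_comb_map.
rewrite -sl mulr_suml; apply: unitary_comb_ext.
  by apply: (unitary_comb_sum _ (fun m _ => unitary_combZ (l m) (AdT2 m))).
by move=> A /=; rewrite E1.
Qed.

End UnitaryCombinations.

Section Twirls.
Variables (R : rcfType) (d : nat).
Local Notation M := 'M[R[i]]_d.

Definition flip (i : 'I_d) : M := diag_mx (\row_x (if x == i then -1 else 1)).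

Lemma dagger_flip i : dagger (flip i) = flip i.
Proof.
rewrite /dagger map_diag_mx tr_diag_mx; congr diag_mx.
by apply/matrixP => ? x; rewrite !mxE; case: (x == i); rewrite ?rmorphN rmorph1.
Qed.

Lemma unitary_flip i : unitary (flip i).
Proof.
have flip2 : flip i *m flip i = 1%:M.
  apply/matrixP => x y; rewrite mul_diag_mx !mxE.
  by case: (x == y); case: (x == i); rewrite ?mulr1n ?mulr0n ?mulr0 ?mulrNN ?mulr1.
by rewrite /unitary dagger_flip flip2.
Qed.

Lemma Ad_flipE i A x y : Ad (flip i) A x y =
  (if x == i then -1 else 1) * (if y == i then -1 else 1) * A x y.
Proof. by rewrite /Ad dagger_flip mul_mx_diag mul_diag_mx !mxE mulrAC. Qed.

Lemma dagger_perm_mx (s : {perm 'I_d}) : dagger (perm_mx s : M) = perm_mx s^-1.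
Proof.
rewrite /dagger -tr_perm_mx; congr trmx.
by apply/matrixP => x y; rewrite !mxE conjc_nat.
Qed.

Lemma unitary_perm_mx (s : {perm 'I_d}) : unitary (perm_mx s : M).
Proof. by rewrite /unitary dagger_perm_mx -!perm_mxM mulVg mulgV perm_mx1. Qed.

Lemma Ad_permE (s : {perm 'I_d}) A x y : Ad (perm_mx s : M) A x y = A (s x) (s y).
Proof. by rewrite /Ad dagger_perm_mx -row_permE -col_permE !mxE. Qed.

Definition twirl (U : M) (e : R) (A : M) : M :=
  (2^-1 : R)%:C *: (A + e%:C *: Ad U A).

Lemma unitary_comb_twirl U e :
  unitary U -> unitary_comb (2^-1 * (1 + e)) (twirl U e).
Proof.
move=> uU; apply: unitary_combZ; apply: unitary_combD.
  exact: unitary_comb_id.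
by rewrite -[X in unitary_comb X _]mulr1; exact: unitary_combZ (unitary_comb_Ad uU).
Qed.

Lemma twirlE U e A x y : twirl U e A x y = 2^-1 * (A x y + e%:C * Ad U A x y).
Proof. by rewrite !mxE fmorphV rmorph_nat. Qed.

Definition dephase i := twirl (flip i) 1.
Definition cophase i := twirl (flip i) (-1).

Lemma dephaseE i A x y :
  dephase i A x y = if (x == i) == (y == i) then A x y else 0.
Proof.
rewrite twirlE Ad_flipE rmorph1.
by case: (x == i); case: (y == i); rewrite /=; field.
Qed.

Lemma cophaseE i A x y :
  cophase i A x y = if (x == i) == (y == i) then 0 else A x y.
Proof.
rewrite twirlE Ad_flipE rmorphN1.
by case: (x == i); case: (y == i); rewrite /=; field.
Qed.

Definition swap_twirl (j k : 'I_d) := twirl (perm_mx (tperm j k) : M).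

Lemma swap_twirlE j k e A x y : swap_twirl j k e A x y =
  2^-1 * (A x y + e%:C * A (tperm j k x) (tperm j k y)).
Proof. by rewrite twirlE Ad_permE. Qed.

End Twirls.
Arguments unitary_flip {R d} i.
Arguments unitary_perm_mx {R d} s.

Section PairProjections.
Variables (R : rcfType) (d : nat).
Local Notation M := 'M[R[i]]_d.
Variables (j k : 'I_d).
Hypothesis neq_jk : j != k.

Definition offdiag_proj (e : R) : M -> M :=
  cophase j \o cophase k \o swap_twirl j k e.

Definition diag_proj : M -> M :=
  dephase j \o dephase k \o swap_twirl j k (-1).

Lemma unitary_comb_offdiag_proj e : unitary_comb 0 (offdiag_proj e).
Proof.
have cophase0 i : unitary_comb 0 (@cophase R d i).
  by rewrite -(mulr0 2^-1) -(subrr 1); exact/unitary_comb_twirl/unitary_flip.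
have := unitary_comb_comp (unitary_comb_comp (cophase0 j) (cophase0 k))
  (unitary_comb_twirl e (unitary_perm_mx (tperm j k))).
by rewrite !mul0r.
Qed.

Lemma unitary_comb_diag_proj : unitary_comb 0 diag_proj.
Proof.
have dephase1 i : unitary_comb 1 (@dephase R d i).
  by rewrite -(@mulVf _ 2) ?pnatr_eq0 //; exact/unitary_comb_twirl/unitary_flip.
have := unitary_comb_comp (unitary_comb_comp (dephase1 j) (dephase1 k))
  (unitary_comb_twirl (-1) (unitary_perm_mx (tperm j k))).
by rewrite subrr !mulr0.
Qed.

Lemma offdiag_projE e A : e * e = 1 ->
  offdiag_proj e A = 2^-1 * (A j k + e%:C * A k j) *:
    (ket_bra R d j k + e%:C *: ket_bra R d k j).
Proof.
move=> ee; have {}ee : e%:C * e%:C = 1 :> R[i] by rewrite -rmorphM ee.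
have neq_kj : k != j by rewrite eq_sym.
apply/matrixP => x y; rewrite /= !cophaseE swap_twirlE !mxE !val_eqE.
have [->|xj] := eqVneq x j; have [->|yj] := eqVneq y j;
  rewrite ?eqxx ?(negbTE neq_jk) ?(negbTE neq_kj) ?andbT ?andbF /=
    ?addr0 ?add0r ?mulr0 //.
- by have [->|yk] := eqVneq y k; rewrite /= ?tpermL ?tpermR ?addr0 ?mulr1 ?mulr0.
- have [->|xk] := eqVneq x k; rewrite /= ?tpermL ?tpermR ?mulr1 ?mulr0 //.
  transitivity (2^-1 * (e%:C * e%:C * A k j + e%:C * A j k)); last by ring.
  by rewrite ee mul1r.
Qed.

Lemma diag_projE A :
  diag_proj A = 2^-1 * (A j j - A k k) *: (ket_bra R d j j - ket_bra R d k k).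
Proof.
have neq_kj : k != j by rewrite eq_sym.
apply/matrixP => x y; rewrite /= !dephaseE swap_twirlE !mxE !val_eqE rmorphN1 mulN1r.
have [->|xj] := eqVneq x j; have [->|yj] := eqVneq y j;
  rewrite ?eqxx ?(negbTE neq_jk) ?(negbTE neq_kj) ?andbT ?andbF /=
    ?tpermL ?subr0 ?sub0r ?mulr1 ?mulr0 //.
have [->|xk] := eqVneq x k; have [->|yk] := eqVneq y k;
  rewrite ?eqxx ?(negbTE neq_jk) ?(negbTE neq_kj) ?andbT ?andbF /=
    ?tpermR ?subr0 ?sub0r ?oppr0 ?mulr1 ?mulr0 //; first by ring.
by rewrite !tpermD ?subrr ?mulr0 // eq_sym.
Qed.

End PairProjections.

Lemma tpermM_pair (T : finType) (x y a b : T) :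
  x != y -> a != y -> a != b ->
  (tperm x a * tperm y b)%g x = a /\ (tperm x a * tperm y b)%g y = b.
Proof.
move=> xy ay ab; have ya : y != a by rewrite eq_sym.
have ba : b != a by rewrite eq_sym.
by rewrite !permM tpermL (tpermD ya ba) (tpermD xy ay) tpermL.
Qed.

Lemma sum_cross_diff (V : zmodType) (T : finType) (P : pred T) (f : T -> V) :
  \sum_x f x = 0 ->
  \sum_(a | P a) \sum_(b | ~~ P b) (f a - f b) = (\sum_(a | P a) f a) *+ #|T|.
Proof.
rewrite (bigID P) /= => /eqP; rewrite addrC addr_eq0 => /eqP fP.
rewrite (eq_bigr (fun a => f a *+ #|[predC P]| + \sum_(a | P a) f a)); last first.
  move=> a _; rewrite sumrB fP opprK; congr (_ + _).
  by rewrite sumr_const.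
by rewrite big_split /= sumrMnl (sumr_const P) -mulrnDr addnC cardC.
Qed.

Section PairTransport.
Variables (R : rcfType) (d : nat).
Local Notation M := 'M[R[i]]_d.
Variables (j k : 'I_d) (P : pred 'I_d).
Hypotheses (neq_jk : j != k) (notPk : ~~ P k).

Definition pair_perm (a b : 'I_d) : {perm 'I_d} := tperm j a * tperm k b.

Definition pair_transport (A : M) : M :=
  \sum_(a | P a) \sum_(b | ~~ P b) Ad (perm_mx (pair_perm a b)) A.

Lemma unitary_comb_pair_transport :
  unitary_comb (\sum_(a | P a) \sum_(b | ~~ P b) 1) pair_transport.
Proof.
apply: unitary_comb_sum => a _; apply: unitary_comb_sum => b _.
exact/unitary_comb_Ad/unitary_perm_mx.
Qed.

Lemma pair_transport_diag_diff A :
  pair_transport A j j - pair_transport A k k =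
    \sum_(a | P a) \sum_(b | ~~ P b) (A a a - A b b).
Proof.
rewrite !summxE -sumrB; apply: eq_bigr => a Pa.
rewrite !summxE -sumrB; apply: eq_bigr => b nPb.
have ak : a != k by apply: contraNneq notPk => <-.
have ab : a != b by apply: contraNneq nPb => <-.
by rewrite !Ad_permE; have [-> ->] := tpermM_pair neq_jk ak ab.
Qed.

End PairTransport.

Definition pauli_eqb (b b' : pauli_idx) : bool :=
  match b, b' with
  | SX j k, SX j' k' | SY j k, SY j' k' => (j == j') && (k == k')
  | SZ j, SZ j' => j == j'
  | _, _ => false
  end.

Lemma pauli_eqP : Equality.axiom pauli_eqb.
Proof.
case=> [j k|j k|j] [j' k'|j' k'|j'] /=; try by constructor.
- by apply: (iffP andP) => [[/eqP-> /eqP->]|[-> ->]].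
- by apply: (iffP andP) => [[/eqP-> /eqP->]|[-> ->]].
- by apply: (iffP eqP) => [->|[->]].
Qed.

HB.instance Definition _ := hasDecEq.Build pauli_idx pauli_eqP.

Lemma eq_pauliE b b' : (b == b') = pauli_eqb b b'.
Proof. by []. Qed.

Section BasisEntries.
Variables (R : rcfType) (d : nat).

Lemma basis_mx_diag b (x : 'I_d) : valid_idx d b ->
  basis_mx R d b x x =
    if b is SZ j then (x == j :> nat)%:R - (x == j.+1 :> nat)%:R else 0.
Proof.
case: b => [j k|j k|j] /= hb; rewrite !mxE; do !case: eqP => //= ?.
all: by rewrite ?addr0 ?subrr ?mulr0 || lia.
Qed.

Lemma basis_mx_upper b (j k : 'I_d) : valid_idx d b -> (j < k)%N ->
  basis_mx R d b j k = (b == SX j k)%:R - 'i * (b == SY j k)%:R.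
Proof.
case: b => [j' k'|j' k'|j'] /= hb jk; rewrite !mxE ?eq_pauliE /=; do !case: eqP => //= ?.
all: by ring || lia.
Qed.

Lemma basis_mx_lower b (j k : 'I_d) : valid_idx d b -> (j < k)%N ->
  basis_mx R d b k j = (b == SX j k)%:R + 'i * (b == SY j k)%:R.
Proof.
case: b => [j' k'|j' k'|j'] /= hb jk; rewrite !mxE ?eq_pauliE /=; do !case: eqP => //= ?.
all: by ring || lia.
Qed.

End BasisEntries.

Section BasisDiagonalSums.
Variables (R : rcfType) (d : nat).

Lemma sum_indicator (P : pred 'I_d) n (n_lt_d : (n < d)%N) :
  \sum_(a | P a) ((a == n :> nat)%:R : R[i]) = (P (Ordinal n_lt_d))%:R.
Proof.
rewrite big_mkcond (bigD1 (Ordinal n_lt_d)) //= eqxx big1 ?addr0.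
  by case: (P _).
by move=> a /negbTE an; rewrite -val_eqE /= in an; rewrite an if_same.
Qed.

Lemma basis_mx_trace b : valid_idx d b -> \sum_x basis_mx R d b x x = 0.
Proof.
move=> hb; under eq_bigr do rewrite basis_mx_diag //.
case: b hb => [j k|j k|j] /= hb; rewrite ?big1_eq // sumrB.
by rewrite (sum_indicator predT (ltnW hb)) (sum_indicator predT hb) subrr.
Qed.

Lemma basis_mx_diag_head_sum b j : valid_idx d b -> (j.+1 < d)%N ->
  \sum_(a : 'I_d | (a <= j)%N) basis_mx R d b a a = (b == SZ j)%:R.
Proof.
move=> hb hj; under eq_bigr do rewrite basis_mx_diag //.
case: b hb => [j' k'|j' k'|j'] /= hb; rewrite ?big1_eq // sumrB.
rewrite (sum_indicator (fun a => (a <= j)%N) (ltnW hb)).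
rewrite (sum_indicator (fun a => (a <= j)%N) hb) eq_pauliE /=.
by case: ltngtP => //= _; rewrite ?subrr ?subr0.
Qed.

End BasisDiagonalSums.

Section Isolation.
Variables (R : rcfType) (d : nat).
Local Notation M := 'M[R[i]]_d.

Definition isolates (T : M -> M) (b : pauli_idx) : Prop :=
  forall b', valid_idx d b' -> T (basis_mx R d b') = (b' == b)%:R *: basis_mx R d b.

Lemma isolates_SX (j k : 'I_d) (jk : (j < k)%N) :
  isolates (offdiag_proj j k 1) (SX j k).
Proof.
have njk : j != k by rewrite -val_eqE neq_ltn jk.
move=> b hb; rewrite offdiag_projE ?mulr1 // rmorph1 scale1r mul1r.
by rewrite basis_mx_upper // basis_mx_lower //; congr (_ *: _); field.
Qed.

Lemma isolates_SY (j k : 'I_d) (jk : (j < k)%N) :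
  isolates (offdiag_proj j k (-1)) (SY j k).
Proof.
have njk : j != k by rewrite -val_eqE neq_ltn jk.
move=> b hb; rewrite offdiag_projE ?mulrNN ?mulr1 // rmorphN1 scaleN1r mulN1r.
rewrite basis_mx_upper // basis_mx_lower // /= scalerA; congr (_ *: _).
by field.
Qed.

Lemma zerospan_isolates_SZ j : (j.+1 < d)%N ->
  exists T : M -> M, in_zerospan T /\ isolates T (SZ j).
Proof.
move=> hj; pose j0 : 'I_d := Ordinal (ltnW hj); pose j1 : 'I_d := Ordinal hj.
pose P (a : 'I_d) := (a <= j)%N.
have nj01 : j0 != j1 by rewrite -val_eqE /= neq_ltn ltnSn.
have nPj1 : ~~ P j1 by rewrite /P /= -ltnNge.
have d0 : (d%:R : R[i]) != 0 by rewrite pnatr_eq0 -lt0n (ltn_trans _ hj).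
pose T A := (2 / d%:R : R)%:C *: diag_proj j0 j1 (pair_transport j0 j1 P A).
exists T; split.
  suff : unitary_comb (2 / d%:R * (0 * \sum_(a | P a) \sum_(b | ~~ P b) 1)) T.
    by rewrite mul0r mulr0.
  apply: unitary_combZ; apply: unitary_comb_comp.
    exact: unitary_comb_diag_proj.
  exact: unitary_comb_pair_transport.
move=> b hb; rewrite /T (diag_projE nj01).
have -> := pair_transport_diag_diff nj01 nPj1 (basis_mx R d b).
rewrite (@sum_cross_diff _ _ P (fun a => basis_mx R d b a a)) ?basis_mx_trace //.
rewrite card_ord basis_mx_diag_head_sum // scalerA; congr (_ *: _).
rewrite -mulr_natr rmorphM fmorphV !rmorph_nat.
by field; rewrite ?d0.
Qed.

End Isolation.

Theorem lemma1 (R : realType) (d : nat) (b : pauli_idx) :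
  valid_idx d b ->
  exists T : 'M[R[i]]_d -> 'M[R[i]]_d,
    in_zerospan T /\
    T (basis_mx R d b) = basis_mx R d b /\
    (forall b' : pauli_idx, valid_idx d b' -> b' <> b ->
       T (basis_mx R d b') = 0).
Proof.
move=> hb; suff [T [zT isoT]] :
    exists T : 'M[R[i]]_d -> 'M[R[i]]_d, in_zerospan T /\ isolates T b.
  exists T; split=> //; split; first by rewrite isoT // eqxx scale1r.
  by move=> b' hb' nb; rewrite isoT // (introF eqP nb) scale0r.
case: b hb => [j k|j k|j] /= hb; last exact: zerospan_isolates_SZ.
all: have /andP[jk kd] := hb.
- exists (offdiag_proj (Ordinal (ltn_trans jk kd)) (Ordinal kd) 1).
  by split; [exact: unitary_comb_offdiag_proj | exact: isolates_SX].
- exists (offdiag_proj (Ordinal (ltn_trans jk kd)) (Ordinal kd) (-1)).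
  by split; [exact: unitary_comb_offdiag_proj | exact: isolates_SY].
Qed.
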